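(* Let $a,b\in\mathbb F_{q^2}^*$, let $j_1,i_2,j_2$ be integers with $0<j_1<d$, $0<i_2<(q+1)/d$, $0\le j_2<d$, and assume $1+a\epsilon^{j_1k}\ne0$ for all $0\le k<d$. For $0\le k<d$ put $L_k(X)=1+a\epsilon^{j_1k}+b\epsilon^{j_2k}X^{i_2}$. (i) If for some $0\le k<d$ there is $\lambda_k\in\mu_{q+1}$ with $L_k\in\mathcal L_k(i_2,0;\lambda_k)$, then $\lambda_k=(1+a\epsilon^{j_1k})^q/(b\epsilon^{j_2k})$, there is an integer $\alpha(k)$ with $\bigl((1+a^q\epsilon^{-j_1k})/b\bigr)^{(q+1)/d}=\epsilon^{\alpha(k)}$, and $\lambda_k^{(q+1)/d}=\epsilon^{-j_2k(q+1)/d+\alpha(k)}$. (ii) If for every $0\le k<d$ there is $\lambda_k\in\mu_{q+1}$ with $L_k\in\mathcal L_k(i_2,0;\lambda_k)$, then $d$ is even, $j_1=d/2$, $a^{q-1}=-1$ and $(1-a)/b\in\mu_{q+1}$; moreover $((1+a)/(1-a))^{q+1}=1$, and if $u,v\in\mathbb Z/d\mathbb Z$ are defined by $((1-a)/b)^{(q+1)/d}=\epsilon^u$ and $((1+a)/(1-a))^{(q+1)/d}=\epsilon^v$, and $\pi(k)\in\mathbb Z/d\mathbb Z$ by $\lambda_k^{(q+1)/d}=\epsilon^{\pi(k)}$, then for all $k\in\mathbb Z/d\mathbb Z$ $$\pi(k)+(r-i_2)k=\Bigl(-j_2\frac{q+1}{d}+r-i_2\Bigr)k+\delta(k)v+u,$$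 for every integer $r$, where $\delta(k)=0$ if $k$ is even and $\delta(k)=1$ if $k$ is odd.
   Context: $q$ is a prime power, $d$ is a positive divisor of $q+1$, and $\epsilon\in\mathbb F_{q^2}^*$ has multiplicative order $d$. $\mu_{q+1}$ is the subgroup of order $q+1$ of $\mathbb F_{q^2}^*$. For $a\in\mathbb F_{q^2}$, $\bar a=a^q$; for $f(X)=\sum_{i=0}^n a_iX^i\in\mathbb F_{q^2}[X]$ with $a_n\neq0$, $\tilde f(X)=\sum_{i=0}^n\bar a_iX^{n-i}$. For $0\le k<d$, $0\le t<(q+1)/d$ and $\lambda\in\mu_{q+1}$, $\mathcal L_k(t,0;\lambda)$ is the set of $L\in\mathbb F_{q^2}[X]$ with $\deg L=t$, $\tilde L=\lambda L$ and $\gcd(L,X^{(q+1)/d}-\epsilon^k)=1$. *)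

From HB Require Import structures.
From mathcomp Require Import all_boot all_order all_algebra.
Set Implicit Arguments. Unset Strict Implicit. Unset Printing Implicit Defensive.
Import Order.TTheory GRing.Theory Num.Theory.
Local Open Scope ring_scope.

Definition mu {F : fieldType} (q : nat) (x : F) : bool := x ^+ q.+1 == 1.

(* tilde f = sum_i conj(a_i) X^(n-i), with n = deg f and conj a = a^q. *)
Definition tilde {F : fieldType} (q : nat) (f : {poly F}) : {poly F} :=
  \poly_(i < size f) ((f`_((size f).-1 - i)) ^+ q).

Definition calL {F : fieldType} (q d : nat) (eps : F) (k t : nat) (lam : F)
  (L : {poly F}) : Prop :=
  [/\ size L = t.+1, tilde q L = lam *: L
    & coprimep L ('X^((q + 1) %/ d) - (eps ^+ k)%:P)].

Definition Lk {F : fieldType} (a b eps : F) (j1 i2 j2 k : nat) : {poly F} :=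
  (1 + a * eps ^+ (j1 * k))%:P + (b * eps ^+ (j2 * k)) *: 'X^i2.

From mathcomp Require Import all_boot all_algebra all_field.
From mathcomp Require Import ring zify.
Set Implicit Arguments. Unset Strict Implicit. Unset Printing Implicit Defensive.
Import GRing.Theory.
Local Open Scope ring_scope.

(* The two coefficients of [L_k = c + e X^i2] satisfy [c^q = lam e] and
   [e^q = lam c], so every constant term [1 + a eps^(j1 k)] has the norm
   [x^(q+1)] of [b].  Comparing with [k = 0] leaves, for [w = eps^(j1 k)], only
   [w = 1] or [a w = a^q]; since [eps^j1 <> 1] this forces [eps^j1 = -1], i.e.
   [d = 2 j1] and [a^q = -a].  The constant term of [L_k] then conjugates to
   [1 - a] or [1 + a] according to the parity of [k], and raising
   [lam_k b eps^(j2 k) = 1 -+ a] to the power [(q+1)/d] gives the congruence. *)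

Section PrimRootIntExp.
Variables (F : fieldType) (d : nat) (eps : F).
Hypothesis prim_eps : d.-primitive_root eps.

Let d_gt0 : (0 < d)%N := prim_order_gt0 prim_eps.
Let d_neq0 : d%:Z != 0.
Proof. by rewrite eqz_nat -lt0n. Qed.
Let eps_neq0 : eps != 0.
Proof. by rewrite (prim_root_eq0 prim_eps) -lt0n. Qed.

Let absz_modz_lt (x : int) : (`|(x %% d)%Z| < d)%N.
Proof. by rewrite -ltz_nat gez0_abs ?modz_ge0 ?ltz_pmod ?ltz_nat. Qed.

Lemma prim_root_expz_mod (x : int) : eps ^ x = eps ^+ `|(x %% d)%Z|%N.
Proof.
rewrite {1}(divz_eq x d) expfzDr // -exprz_exp exprzAC -exprnP.
rewrite (prim_expr_order prim_eps) exp1rz mul1r.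
by case: (x %% d)%Z (modz_ge0 x d_neq0).
Qed.

Lemma eq_prim_root_expz (x y : int) : (eps ^ x == eps ^ y) = (x == y %[mod d])%Z.
Proof.
rewrite !prim_root_expz_mod (eq_prim_root_expr prim_eps) !modn_small //.
by rewrite -eqz_nat !gez0_abs ?modz_ge0.
Qed.
End PrimRootIntExp.

Section Frobenius.
Variables (F : finFieldType) (p n q : nat).
Hypotheses (p_prime : prime p) (qE : q = (p ^ n)%N) (cardF : #|F| = (q ^ 2)%N).

Lemma frobeniusD (x y : F) : (x + y) ^+ q = x ^+ q + y ^+ q.
Proof.
have pcharF : p \in [pchar F].
  by apply: (card_finPcharP (n := (n * 2)%N)); rewrite // cardF qE expnM.
by apply: exprDn_pchar; rewrite qE pnatX (eq_pnat _ (pcharf_eq pcharF)) pnat_id.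
Qed.

Lemma frobenius_binomial (x w : F) :
  w ^+ q.+1 = 1 -> (1 + x * w) ^+ q = 1 + x ^+ q * w^-1.
Proof.
move=> wq1; have w_neq0 : w != 0.
  by apply: contra_eq_neq wq1 => ->; rewrite expr0n eq_sym oner_neq0.
rewrite frobeniusD expr1n exprMn; congr (1 + x ^+ q * _).
by apply: (mulIf w_neq0); rewrite -exprSr wq1 mulVf.
Qed.
End Frobenius.

Lemma calL_binomial_coef (F : fieldType) (q d : nat) (eps : F) (k t : nat)
    (lam c e : F) :
  (0 < t)%N -> calL q d eps k t lam (c%:P + e *: 'X^t) ->
  c ^+ q = lam * e /\ e ^+ q = lam * c.
Proof.
move=> t_gt0 [sizeL tildeL _].
have [coef_t coef_0] := (congr1 (coefp t) tildeL, congr1 (coefp 0) tildeL).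
move: coef_t coef_0; rewrite /= /tilde sizeL !coef_poly.
rewrite !coefZ !coefD !coefC !coefZ !coefXn.
rewrite ltnSn subnn subn0 /= eqxx (gtn_eqF t_gt0) (ltn_eqF t_gt0).
by rewrite !mulr0 !mulr1 !addr0 !add0r => -> ->.
Qed.

Lemma calL_binomial_norm (F : fieldType) (q d : nat) (eps : F) (k t : nat)
    (lam c e : F) :
  (0 < t)%N -> calL q d eps k t lam (c%:P + e *: 'X^t) -> c ^+ q.+1 = e ^+ q.+1.
Proof.
by move=> t_gt0 /(calL_binomial_coef t_gt0)[cq eq]; rewrite !exprSr cq eq mulrAC.
Qed.

Lemma exists_prim_root_power (F : fieldType) (d m N : nat) (eps x : F) :
  d.-primitive_root eps -> (m * d)%N = N -> x ^+ N = 1 ->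
  exists i : nat, x ^+ m = eps ^+ i.
Proof.
move=> prim_eps <- xN; have : (x ^+ m) ^+ d = 1 by rewrite -exprM.
by case/(prim_rootP prim_eps) => i ->; exists i.
Qed.

Lemma binomial_norm_eq_cases (F : fieldType) (A A' w : F) : w != 0 ->
  (1 + A' * w^-1) * (1 + A * w) = (1 + A') * (1 + A) -> w = 1 \/ A * w = A'.
Proof.
move=> w_neq0 normE.
have : (w - 1) * (A * w - A') = 0.
  have -> : (w - 1) * (A * w - A')
      = w * ((1 + A' * w^-1) * (1 + A * w) - (1 + A') * (1 + A)) by field.
  by rewrite normE subrr mulr0.
by move/eqP; rewrite mulf_eq0 !subr_eq0 => /orP[] /eqP; [left | right].
Qed.

Lemma half_order_of_two_valued_powers (F : fieldType) (d j : nat) (eps a c : F) :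
  d.-primitive_root eps -> a != 0 -> (0 < j < d)%N ->
  (forall k, (k < d)%N -> eps ^+ (j * k) = 1 \/ a * eps ^+ (j * k) = c) ->
  (j * 2 = d)%N /\ a * eps ^+ j = c.
Proof.
move=> prim_eps a_neq0 /andP[j_gt0 j_lt_d] two_valued.
have eps_neq0 : eps != 0.
  by rewrite (prim_root_eq0 prim_eps) -lt0n (prim_order_gt0 prim_eps).
have epsj_neq1 : eps ^+ j != 1 by rewrite -(prim_order_dvd prim_eps) gtnNdvd.
have aepsj : a * eps ^+ j = c.
  have [|] := two_valued 1%N (leq_ltn_trans j_gt0 j_lt_d); rewrite muln1 //.
  by move/eqP; rewrite (negbTE epsj_neq1).
split=> //.
have eps2j : eps ^+ (j * 2) = 1.
  have [d_gt2|d_le2] := ltnP 2 d; last first.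
    by rewrite (_ : j * 2 = d)%N ?(prim_expr_order prim_eps) //; lia.
  have [//|] := two_valued 2%N d_gt2; rewrite -aepsj => /(mulfI a_neq0).
  rewrite exprM expr2 -{3}[eps ^+ j]mul1r => /(mulIf (expf_neq0 j eps_neq0)) epsj1.
  by rewrite epsj1 eqxx in epsj_neq1.
move/eqP: eps2j; rewrite -(prim_order_dvd prim_eps) => /dvdnP[[|[|t]] jE]; lia.
Qed.

Section BinomialsInL.
Variables (F : finFieldType) (p n q d : nat) (eps a b : F) (j1 i2 j2 : nat).
Hypotheses (p_prime : prime p) (qE : q = (p ^ n)%N) (cardF : #|F| = (q ^ 2)%N).
Hypotheses (d_dvd : (d %| q + 1)%N) (prim_eps : d.-primitive_root eps).
Hypotheses (b_neq0 : b != 0) (i2_gt0 : (0 < i2)%N).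

Local Notation m := ((q + 1) %/ d)%N.

Let d_gt0 : (0 < d)%N := prim_order_gt0 prim_eps.
Let eps_neq0 : eps != 0.
Proof. by rewrite (prim_root_eq0 prim_eps) -lt0n. Qed.
Let m_mul_d : (m * d)%N = q.+1.
Proof. by rewrite divnK // addn1. Qed.
Let eps_norm : eps ^+ q.+1 = 1.
Proof. by rewrite -m_mul_d mulnC exprM (prim_expr_order prim_eps) expr1n. Qed.
Let lead_neq0 k : b * eps ^+ (j2 * k) != 0.
Proof. by rewrite mulf_neq0 // expf_neq0. Qed.
Let conj_Lk_const k :
  (1 + a * eps ^+ (j1 * k)) ^+ q = 1 + a ^+ q * eps ^- (j1 * k).
Proof.
apply: (frobenius_binomial p_prime qE cardF).
by rewrite -exprM mulnC exprM eps_norm expr1n.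
Qed.

Lemma prim_root_power_of_mu x : x ^+ q.+1 = 1 -> exists i : nat, x ^+ m = eps ^+ i.
Proof. exact: exists_prim_root_power prim_eps m_mul_d. Qed.

Lemma Lk_lambdaE k lam : calL q d eps k i2 lam (Lk a b eps j1 i2 j2 k) ->
  lam = (1 + a * eps ^+ (j1 * k)) ^+ q / (b * eps ^+ (j2 * k)).
Proof. by case/(calL_binomial_coef i2_gt0) => -> _; rewrite mulfK. Qed.

Lemma Lk_lambda_power k lam :
    mu q lam -> calL q d eps k i2 lam (Lk a b eps j1 i2 j2 k) ->
  exists alpha : int,
    ((1 + a ^+ q * eps ^- (j1 * k)) / b) ^+ m = eps ^ alpha /\
    lam ^+ m = eps ^ (- ((j2 * k * m)%N%:Z) + alpha).
Proof.
move=> /eqP lam_mu /(calL_binomial_coef i2_gt0)[constE _].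
have [i lam_m] := prim_root_power_of_mu lam_mu.
exists (i + j2 * k * m)%N; split; last by rewrite PoszD addrCA addNr addr0.
by rewrite -conj_Lk_const constE mulrA mulrAC mulfK // exprMn lam_m -exprM -exprD.
Qed.

Section AllK.
Variable lam : nat -> F.
Hypotheses (a_neq0 : a != 0) (j1_bounds : (0 < j1 < d)%N).
Hypothesis Lk_const_neq0 : forall k, (k < d)%N -> 1 + a * eps ^+ (j1 * k) != 0.
Hypothesis all_calL : forall k, (k < d)%N ->
  mu q (lam k) /\ calL q d eps k i2 (lam k) (Lk a b eps j1 i2 j2 k).

Lemma norm_Lk_const k : (k < d)%N -> (1 + a * eps ^+ (j1 * k)) ^+ q.+1 = b ^+ q.+1.
Proof.
move=> k_lt_d; have [_ /(calL_binomial_norm i2_gt0) ->] := all_calL k_lt_d.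
by rewrite exprMn -exprM mulnC exprM eps_norm expr1n mulr1.
Qed.

Lemma j1_half_order : (j1 * 2 = d)%N /\ a * eps ^+ j1 = a ^+ q.
Proof.
apply: half_order_of_two_valued_powers => // k k_lt_d.
apply: binomial_norm_eq_cases; first exact: expf_neq0.
rewrite -conj_Lk_const -exprSr norm_Lk_const // -(norm_Lk_const d_gt0).
by rewrite muln0 expr0 mulr1 exprSr (frobeniusD p_prime qE cardF) expr1n.
Qed.

Let d_gt1 : (1 < d)%N.
Proof. by case: j1_half_order => <- _; case/andP: j1_bounds; lia. Qed.

Lemma eps_j1 : eps ^+ j1 = -1.
Proof.
have : (eps ^+ j1) ^+ 2 == 1.
  by rewrite -exprM j1_half_order.1 (prim_expr_order prim_eps).
case/andP: j1_bounds => j1_gt0 j1_lt_d.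
by rewrite sqrf_eq1 -(prim_order_dvd prim_eps) gtnNdvd //= => /eqP.
Qed.

Lemma conj_a : a ^+ q = - a.
Proof. by rewrite -j1_half_order.2 eps_j1 mulrN1. Qed.

Lemma conj_Lk_const_parity k :
  (1 + a * eps ^+ (j1 * k)) ^+ q = if odd k then 1 + a else 1 - a.
Proof.
rewrite conj_Lk_const conj_a exprM eps_j1 -signr_odd.
by case: (odd k); rewrite ?expr0 ?expr1 ?invr1 ?invrN1 ?mulrN1 ?opprK ?mulr1.
Qed.

Let Lk_const_1 : 1 + a * eps ^+ (j1 * 1) = 1 - a.
Proof. by rewrite muln1 eps_j1 mulrN1. Qed.

Lemma norm_sub_a : (1 - a) ^+ q.+1 = b ^+ q.+1.
Proof. by rewrite -Lk_const_1 norm_Lk_const. Qed.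

Lemma norm_add_a : (1 + a) ^+ q.+1 = b ^+ q.+1.
Proof. by have := norm_Lk_const d_gt0; rewrite muln0 expr0 mulr1. Qed.

Let sub_a_neq0 : 1 - a != 0.
Proof. by rewrite -Lk_const_1 Lk_const_neq0. Qed.

Lemma mu_sub_a_div_b : ((1 - a) / b) ^+ q.+1 = 1.
Proof. by rewrite expr_div_n norm_sub_a divff // expf_neq0. Qed.

Lemma mu_add_a_div_sub_a : ((1 + a) / (1 - a)) ^+ q.+1 = 1.
Proof. by rewrite expr_div_n norm_add_a -norm_sub_a divff // expf_neq0. Qed.

Lemma lambda_power (u v : int) k : (k < d)%N ->
    ((1 - a) / b) ^+ m = eps ^ u -> ((1 + a) / (1 - a)) ^+ m = eps ^ v ->
  lam k ^+ m * eps ^+ (j2 * m * k) = eps ^ (u + (odd k)%:Z * v).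
Proof.
move=> k_lt_d uE vE; apply: (mulIf (expf_neq0 m b_neq0)).
have [_ /(calL_binomial_coef i2_gt0)[constE _]] := all_calL k_lt_d.
rewrite mulnAC exprM -!exprMn mulrAC -mulrA -constE conj_Lk_const_parity.
case: (odd k) => /=.
  have -> : 1 + a = (1 + a) / (1 - a) * ((1 - a) / b) * b by rewrite -mulrA !divfK.
  by rewrite exprMn [(_ * _) ^+ m]exprMn vE uE expfzDr // mul1r (mulrC (eps ^ u)).
by rewrite -[1 - a](divfK b_neq0) exprMn uE mul0r addr0.
Qed.

Lemma lambda_power_exponent (u v : int) (pi : nat -> int) k : (k < d)%N ->
    ((1 - a) / b) ^+ m = eps ^ u -> ((1 + a) / (1 - a)) ^+ m = eps ^ v ->
    lam k ^+ m = eps ^ pi k ->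
  (pi k + (j2 * m)%N%:Z * k%:Z = u + (odd k)%:Z * v %[mod d])%Z.
Proof.
move=> k_lt_d uE vE piE; apply/eqP; rewrite -(eq_prim_root_expz prim_eps).
by rewrite expfzDr // -PoszM -exprnP -piE (lambda_power k_lt_d uE vE).
Qed.

Lemma Lk_all_structure :
  [/\ ~~ odd d, j1 = (d %/ 2)%N, a ^+ (q - 1) = -1 & mu q ((1 - a) / b)].
Proof.
have [j1E _] := j1_half_order; have q_gt0 : (0 < q)%N by rewrite qE expn_gt0 prime_gt0.
split; first by rewrite -j1E oddM andbF.
- by rewrite -j1E mulnK.
- by apply: (mulIf a_neq0); rewrite -exprSr subn1 prednK // conj_a mulN1r.
- exact/eqP/mu_sub_a_div_b.
Qed.

Lemma lambda_power_congr (u v : int) (pi : nat -> int) :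
    ((1 - a) / b) ^+ m = eps ^ u -> ((1 + a) / (1 - a)) ^+ m = eps ^ v ->
    (forall k, (k < d)%N -> lam k ^+ m = eps ^ pi k) ->
  forall (r : int) (k : nat), (k < d)%N ->
    (pi k + (r - i2%:Z) * k%:Z
     = (- ((j2 * m)%N%:Z) + r - i2%:Z) * k%:Z + (odd k)%:Z * v + u %[mod d%:Z])%Z.
Proof.
move=> uE vE piE r k k_lt_d; set shift := ((- ((j2 * m)%N%:Z) + r - i2%:Z) * k%:Z)%R.
have -> : (pi k + (r - i2%:Z) * k%:Z = pi k + (j2 * m)%N%:Z * k%:Z + shift)%R
  by rewrite /shift; ring.
have -> : (shift + (odd k)%:Z * v + u = u + (odd k)%:Z * v + shift)%R by ring.
apply/eqP; rewrite eqz_modDr; apply/eqP.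
exact: lambda_power_exponent uE vE (piE k k_lt_d).
Qed.

End AllK.
End BinomialsInL.

Theorem lemma4p1 (F : finFieldType) (p n q d : nat) (eps a b : F)
  (j1 i2 j2 : nat) :
  prime p -> (0 < n)%N -> q = (p ^ n)%N -> #|F| = (q ^ 2)%N ->
  (0 < d)%N -> (d %| q + 1)%N -> d.-primitive_root eps ->
  a != 0 -> b != 0 ->
  (0 < j1 < d)%N -> (0 < i2 < (q + 1) %/ d)%N -> (j2 < d)%N ->
  (forall k, (k < d)%N -> 1 + a * eps ^+ (j1 * k) != 0) ->
  (forall (k : nat) (lam : F), (k < d)%N -> mu q lam ->
     calL q d eps k i2 lam (Lk a b eps j1 i2 j2 k) ->
     lam = (1 + a * eps ^+ (j1 * k)) ^+ q / (b * eps ^+ (j2 * k)) /\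
     exists alpha : int,
       ((1 + a ^+ q * eps ^- (j1 * k)) / b) ^+ ((q + 1) %/ d) = eps ^ alpha /\
       lam ^+ ((q + 1) %/ d) = eps ^ (- ((j2 * k * ((q + 1) %/ d))%N%:Z) + alpha))
  /\
  (forall lam : nat -> F,
     (forall k, (k < d)%N ->
        mu q (lam k) /\ calL q d eps k i2 (lam k) (Lk a b eps j1 i2 j2 k)) ->
     [/\ ~~ odd d, j1 = (d %/ 2)%N, a ^+ (q - 1) = -1 & mu q ((1 - a) / b)] /\
     [/\ ((1 + a) / (1 - a)) ^+ q.+1 = 1,
         (exists u : int, ((1 - a) / b) ^+ ((q + 1) %/ d) = eps ^ u),
         (exists v : int, ((1 + a) / (1 - a)) ^+ ((q + 1) %/ d) = eps ^ v)
       & forall (u v : int) (pi : nat -> int),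
           ((1 - a) / b) ^+ ((q + 1) %/ d) = eps ^ u ->
           ((1 + a) / (1 - a)) ^+ ((q + 1) %/ d) = eps ^ v ->
           (forall k, (k < d)%N -> lam k ^+ ((q + 1) %/ d) = eps ^ pi k) ->
           forall (r : int) (k : nat), (k < d)%N ->
             (pi k + (r - i2%:Z) * k%:Z
              = (- ((j2 * ((q + 1) %/ d))%N%:Z) + r - i2%:Z) * k%:Z
                + (odd k)%:Z * v + u %[mod d%:Z])%Z]).
Proof.
move=> p_prime _ qE cardF _ d_dvd prim_eps a_neq0 b_neq0 j1_bounds /andP[i2_gt0 _] _.
move=> Lk_const_neq0; split=> [k lam _ lam_mu L_calL | lam all_calL].
  split; first exact: (Lk_lambdaE prim_eps b_neq0 i2_gt0 L_calL).
  exact: (Lk_lambda_power p_prime qE cardF d_dvd prim_eps b_neq0 i2_gt0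
    lam_mu L_calL).
have mu_sub := mu_sub_a_div_b p_prime qE cardF d_dvd prim_eps b_neq0 i2_gt0
  a_neq0 j1_bounds all_calL.
have mu_add := mu_add_a_div_sub_a p_prime qE cardF d_dvd prim_eps b_neq0 i2_gt0
  a_neq0 j1_bounds Lk_const_neq0 all_calL.
split; first exact: (Lk_all_structure p_prime qE cardF d_dvd prim_eps b_neq0 i2_gt0
  a_neq0 j1_bounds all_calL).
split=> //.
- by have [i ->] := prim_root_power_of_mu d_dvd prim_eps mu_sub; exists i.
- by have [i ->] := prim_root_power_of_mu d_dvd prim_eps mu_add; exists i.
exact: (lambda_power_congr p_prime qE cardF d_dvd prim_eps b_neq0 i2_gt0
  a_neq0 j1_bounds Lk_const_neq0 all_calL).
Qed.
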